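(* Let $V$ be a finite set of nails and let $T$ be a commutator tree over $V$ whose leaves are words $t_1, \dots, t_m \in F(V)$ with $t_i$ solving a specification $g_i$ on $V$, and let $f = g_1 \vee \cdots \vee g_m$. Then (the value of) $T$ solves $f$ if and only if there is no internal node $u$ of $T$ and no $S \subseteq V$ with $f(S) = \mathsf{hang}$ such that the value of $u$ satisfies $(\mathrm{val}(u))|_S = 0$. In particular, $T$ solves $f$ if, for every $S$ with $f(S) = \mathsf{hang}$ and every internal node $u$, the specifications $\phi_1, \phi_2$ solved by the values of the two children of $u$ separate above $S$, i.e.\ there is $S'$ with $S \subseteq S' \subseteq V$ and $\phi_1(S') \neq \phi_2(S')$.
   Context: Words are elements of the free group $F(V)$ on a finite set $V$ of nails, written additively ($+$ group operation, $-$ inverse, $0$ identity). The commutator is $[a,b] = a + b - a - b$. A commutator tree is a finite rooted binary tree whose leaves are labelled by words; the value of a leaf is its label, the value of an internal node with left child $u_1$ and right child $u_2$ is $[\mathrm{val}(u_1), \mathrm{val}(u_2)]$, and the value of the tree is the value of its root. For $S \subseteq V$, $h|_S$ is the image of $h$ under the homomorphism killing the generators in $S$. A specification on $V$ is a monotone function $f: 2^V \to \{\mathsf{hang}, \mathsf{fall}\}$ with $f(V) = \mathsf{fall}$, where $\mathsf{hang} < \mathsf{fall}$ and monotone means $S \subseteq S' \Rightarrow f(S) \le f(S')$. A word $h$ solves $f$ if for every $S \subseteq V$: $h|_S = 0 \iff f(S) = \mathsf{fall}$. $\vee$ is the pointwise $\max$ with respect to $\mathsf{hang} < \mathsf{fall}$.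 Every word in $F(V)$ solves the specification $S \mapsto (\mathsf{fall}$ if $h|_S=0$, else $\mathsf{hang})$. *)

(* Free group F(V) on a finite set V of nails, represented by
   words (sequences of signed letters) modulo free reduction. *)
From mathcomp Require Import all_boot.
Set Implicit Arguments. Unset Strict Implicit. Unset Printing Implicit Defensive.

Section FreeGroup.
Variable V : finType.

(* a letter (v, true) is the generator v, (v, false) is -v *)
Definition letter := (V * bool)%type.
Definition word := seq letter.

Definition inv_letter (x : letter) : letter := (x.1, ~~ x.2).

Definition reduce (w : word) : word :=
  foldr (fun x acc => match acc with
                      | y :: r => if y == inv_letter x then r else x :: acc
                      | [::] => [:: x]
                      end) [::] w.

Definition is_zero (w : word) : bool := reduce w == [::].

Definition wadd (a b : word) : word := a ++ b.
Definition wopp (a : word) : word := rev (map inv_letter a).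
Definition comm (a b : word) : word := wadd a (wadd b (wadd (wopp a) (wopp b))).

(* h|_S : image of h under the homomorphism killing the generators in S *)
Definition restrict (S : {set V}) (w : word) : word :=
  filter (fun x => x.1 \notin S) w.

End FreeGroup.

Inductive outcome := hang | fall.

Definition le_outcome (a b : outcome) : bool :=
  match a, b with fall, hang => false | _, _ => true end.

Definition join_outcome (a b : outcome) : outcome :=
  match a with fall => fall | hang => b end.

Definition spec_fun (V : finType) := {set V} -> outcome.

Definition is_spec (V : finType) (f : spec_fun V) : Prop :=
  (forall S S' : {set V}, S \subset S' -> le_outcome (f S) (f S')) /\
  f [set: V] = fall.

Definition spec_join (V : finType) (f g : spec_fun V) : spec_fun V :=
  fun S => join_outcome (f S) (g S).

Definition solves (V : finType) (h : word V) (f : spec_fun V) : Prop :=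
  forall S : {set V}, is_zero (restrict S h) <-> f S = fall.

Definition spec_of (V : finType) (h : word V) : spec_fun V :=
  fun S => if is_zero (restrict S h) then fall else hang.

Inductive ctree (A : Type) := Leaf of A | Node of ctree A & ctree A.
Arguments Leaf {A}. Arguments Node {A}.

Fixpoint leaves A (T : ctree A) : seq A :=
  match T with Leaf a => [:: a] | Node l r => leaves l ++ leaves r end.

Fixpoint subtree A (u T : ctree A) : Prop :=
  u = T \/ match T with Leaf _ => False | Node l r => subtree u l \/ subtree u r end.

Fixpoint ct_val (V : finType) (B : Type) (T : ctree (word V * B)) : word V :=
  match T with
  | Leaf a => a.1
  | Node l r => comm (ct_val l) (ct_val r)
  end.

Definition leaf_join (V : finType) (T : ctree (word V * spec_fun V)) : spec_fun V :=
  fun S => foldr (fun p acc => join_outcome (p.2 S) acc) hang (leaves T).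

From HB Require Import structures.
From mathcomp Require Import all_boot zify.
Set Implicit Arguments. Unset Strict Implicit. Unset Printing Implicit Defensive.

(* The value of an internal node is a commutator, so if it vanishes when the
   nails of S are killed, so does the value of every ancestor, in particular
   that of T; conversely T is itself an internal node unless it is a leaf.

   For the separation criterion, recall that [a, b] = 0 in a free group means
   that a and b commute, and that commuting elements are powers of a common
   root z: write a = g c g^-1 with c cyclically reduced; c then commutes with
   the conjugate of b (or of -b) letter by letter, and the
   Lyndon-Schuetzenberger lemma produces z.  Suppose both children of a node
   survive above a hanging S while their commutator dies, and let S' contain S
   and separate them.  The child dying at S' is a nonzero power of z, so z dies
   at S' because free groups are torsion-free, and then the other child dies
   at S' as well. *)

Lemma cat_commute_flatten_nseq (T : Type) (u v : seq T) : u ++ v = v ++ u ->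
  exists z m n, u = flatten (nseq m z) /\ v = flatten (nseq n z).
Proof.
have [N] := ubnP (size u + size v); elim: N u v => // N IHN u v size_uv uvC.
wlog le_uv : u v size_uv uvC / size u <= size v => [hw|].
  have [|/ltnW le_vu] := leqP (size u) (size v); first exact: hw.
  have [|z [m [n [-> ->]]]] := hw v u _ (esym uvC) le_vu; first by rewrite addnC.
  by exists z, n, m.
case: u => [|x u'] in size_uv uvC le_uv *; first by exists v, 0, 1; rewrite /= cats0.
set u := x :: u' in size_uv uvC le_uv *.
have Dv : v = u ++ drop (size u) v.
  have := congr1 (take (size u)) uvC.
  rewrite take_size_cat // takel_cat // => Du.
  by rewrite -{1}(cat_take_drop (size u) v) -Du.
set v' := drop (size u) v in Dv.
have uv'C : u ++ v' = v' ++ u.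
  have := congr1 (drop (size u)) uvC.
  by rewrite drop_size_cat // {2}Dv -catA drop_size_cat // -Dv.
have [|z [m [n [Du Dv']]]] := IHN u v' _ uv'C.
  by move: size_uv; rewrite Dv size_cat /u /=; lia.
by exists z, m, (m + n); rewrite Dv nseqD flatten_cat -Du -Dv'.
Qed.

Section FreeGroup.
Variable V : finType.
Implicit Types (x y : letter V) (a b s u v w : word V) (S : {set V}).

Definition nocancel x y := y != inv_letter x.
Definition reduced w := sorted nocancel w.
Definition cyclically_reduced w :=
  if w is x :: w' then nocancel (last x w') x else true.

Definition push x s :=
  if s is y :: s' then (if y == inv_letter x then s' else x :: s) else [:: x].

Lemma inv_letterK : involutive (@inv_letter V).
Proof. by case=> v b; rewrite /inv_letter /= negbK. Qed.

Lemma inv_letter_neq x : (inv_letter x == x) = false.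
Proof. by case: x => v b; rewrite /inv_letter xpair_eqE eqxx; case: b. Qed.

Lemma reduce_cons x w : reduce (x :: w) = push x (reduce w).
Proof. by []. Qed.

Lemma push_cons x y s :
  push x (y :: s) = if y == inv_letter x then s else x :: y :: s.
Proof. by []. Qed.

Lemma reduced_cat x u y v :
  reduced ((x :: u) ++ y :: v) =
  [&& reduced (x :: u), nocancel (last x u) y & reduced (y :: v)].
Proof. by rewrite /reduced cat_cons /= cat_path. Qed.

Lemma reduced_push x s : reduced s -> reduced (push x s).
Proof.
case: s => [|y s] //=; case: ifP => [_ /path_sorted // | yx red_s].
by rewrite /reduced /= /nocancel yx.
Qed.

Lemma push_inv x s : reduced s -> push (inv_letter x) (push x s) = s.
Proof.
case: s => [|y s] /=; first by rewrite inv_letterK eqxx.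
case: eqP => [-> | _]; last by rewrite /= inv_letterK eqxx.
by case: s => [|z s] //= /andP[/negbTE ->].
Qed.

Lemma push_invK x s : reduced s -> push x (push (inv_letter x) s) = s.
Proof. by move/(push_inv (inv_letter x)); rewrite inv_letterK. Qed.

Lemma reduced_reduce w : reduced (reduce w).
Proof. by elim: w => // x w; rewrite reduce_cons; apply: reduced_push. Qed.

Lemma reduce_id w : reduced w -> reduce w = w.
Proof.
elim: w => // x w IHw red_xw; rewrite reduce_cons IHw; last exact: path_sorted red_xw.
by case: w red_xw {IHw} => [|y w] //= /andP[/negbTE ->].
Qed.

Lemma reduce_catr u v : reduce (u ++ reduce v) = reduce (u ++ v).
Proof.
elim: u => [|x u IHu]; first exact/reduce_id/reduced_reduce.
by rewrite !cat_cons !reduce_cons IHu.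
Qed.

Lemma reduce_catl u v : reduce (reduce u ++ v) = reduce (u ++ v).
Proof.
elim: u => // x u IHu; rewrite cat_cons !reduce_cons -IHu.
case: (reduce u) (reduced_reduce u) => [|y s] // red_ys.
rewrite push_cons; case: eqP => [-> | _] //.
by rewrite cat_cons reduce_cons push_invK ?reduced_reduce.
Qed.

Lemma size_reduce w : size (reduce w) <= size w ?= iff (reduce w == w).
Proof.
elim: w => [|x w IHw] //; rewrite reduce_cons.
case: (reduce w) IHw => [|y s] IHw /=; first by rewrite eqseq_cons eqxx /leqif ltnS eqSS.
case: eqP => _; last by rewrite eqseq_cons eqxx /leqif ltnS eqSS.
have lt_s : size s < (size w).+1 by rewrite ltnS ltnW // IHw.1.
split; first exact: ltnW.
by rewrite ltn_eqF //; apply/esym/eqP => Ds; rewrite Ds /= ltnn in lt_s.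
Qed.

Lemma woppK : involutive (@wopp V).
Proof.
move=> w; rewrite /wopp map_rev revK -map_comp.
by rewrite (eq_map (inv_letterK)) map_id.
Qed.

Lemma wopp_cons x w : wopp (x :: w) = rcons (wopp w) (inv_letter x).
Proof. by rewrite /wopp /= rev_cons. Qed.

Lemma wopp_rcons x w : wopp (rcons w x) = inv_letter x :: wopp w.
Proof. by rewrite /wopp map_rcons rev_rcons. Qed.

Lemma reduced_wopp w : reduced w -> reduced (wopp w).
Proof.
rewrite /reduced /wopp rev_sorted sorted_map; apply: sub_sorted => x y /=.
by rewrite /nocancel inv_letterK eq_sym.
Qed.

Lemma reduce_cat_woppK u v : reduce (u ++ wopp u ++ v) = reduce v.
Proof.
elim: u v => // x u IHu v.
rewrite wopp_cons -cats1 -catA cat1s !cat_cons reduce_cons IHu.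
by rewrite reduce_cons push_invK ?reduced_reduce.
Qed.

Lemma reduce_wopp_catK u v : reduce (wopp u ++ u ++ v) = reduce v.
Proof. by rewrite -{2}(woppK u) reduce_cat_woppK. Qed.

Lemma cyclic_reduction w : reduced w ->
  exists g c, w = g ++ c ++ wopp g /\ reduced c /\ cyclically_reduced c.
Proof.
have [n] := ubnP (size w); elim: n w => // n IHn [|x w] size_w red_w.
  by exists [::], [::].
have [cyc | ] := boolP (cyclically_reduced (x :: w)).
  by exists [::], (x :: w); rewrite cats0.
case/lastP: w size_w red_w => [|w y] size_w red_w.
  by rewrite /= /nocancel eq_sym inv_letter_neq.
rewrite /= last_rcons /nocancel negbK => /eqP Dy.
have red_w' : reduced w.
  by move: red_w; rewrite /reduced /= rcons_path => /andP[/path_sorted].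
have [|g [c [-> cyc]]] := IHn w _ red_w'; first by move: size_w; rewrite /= size_rcons; lia.
exists (x :: g), c; split=> //.
by rewrite wopp_cons Dy inv_letterK !rcons_cat.
Qed.

Lemma reduced_flatten_nseq m c :
  reduced c -> cyclically_reduced c -> reduced (flatten (nseq m c)).
Proof.
case: c => [|x c] red_c cyc; first by elim: m.
elim: m => [|[|m] IHm] //; first by rewrite /= cats0.
by rewrite [flatten _]/= -[_ :: _ ++ _]cat_cons reduced_cat red_c [nocancel _ _]cyc.
Qed.

Definition fgroup := {w : word V | reduced w}.
HB.instance Definition _ := Choice.on fgroup.

Definition fg_of w : fgroup := exist _ (reduce w) (reduced_reduce w).
Definition fg_one : fgroup := exist _ [::] isT.
Definition fg_mul (x y : fgroup) : fgroup := fg_of (val x ++ val y).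
Definition fg_inv (x : fgroup) : fgroup :=
  exist _ (wopp (val x)) (reduced_wopp (valP x)).

Lemma fg_mulA : associative fg_mul.
Proof. by move=> x y z; apply: val_inj; rewrite /= reduce_catl reduce_catr catA. Qed.

Lemma fg_mul1 : left_id fg_one fg_mul.
Proof. by move=> x; apply/val_inj/reduce_id/valP. Qed.

Lemma fg_mulr1 : right_id fg_one fg_mul.
Proof. by move=> x; apply: val_inj; rewrite /= cats0 reduce_id ?(valP x). Qed.

Lemma fg_mulV : left_inverse fg_one fg_inv fg_mul.
Proof. by move=> x; apply: val_inj; rewrite /= -[_ ++ _]cats0 -catA reduce_wopp_catK. Qed.

Lemma fg_mulrV : right_inverse fg_one fg_inv fg_mul.
Proof. by move=> x; apply: val_inj; rewrite /= -[_ ++ _]cats0 -catA reduce_cat_woppK. Qed.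

HB.instance Definition _ :=
  isGroup.Build fgroup fg_mulA fg_mul1 fg_mulr1 fg_mulV fg_mulrV.

Local Open Scope group_scope.

Lemma fg_of_val (x : fgroup) : fg_of (val x) = x.
Proof. exact/val_inj/reduce_id/valP. Qed.

Lemma fg_ofM : {morph fg_of : u v / u ++ v >-> u * v}.
Proof. by move=> u v; apply: val_inj; rewrite /= reduce_catl reduce_catr. Qed.

Lemma fg_ofV u : fg_of (wopp u) = (fg_of u)^-1.
Proof.
apply/esym/mulg1_eq; rewrite -fg_ofM; apply: val_inj.
by rewrite /= -[_ ++ _]cats0 -catA reduce_cat_woppK.
Qed.

Lemma fg_of_flatten_nseq m w : fg_of (flatten (nseq m w)) = fg_of w ^+ m.
Proof. by elim: m => [|m IHm]; [apply: val_inj | rewrite /= fg_ofM IHm expgS]. Qed.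

Lemma fg_conj_cyclically_reduced (x : fgroup) :
  exists g c : fgroup, x = c ^ g /\ cyclically_reduced (val c).
Proof.
have [g [c [Dx [red_c cyc]]]] := cyclic_reduction (valP x).
exists (fg_of g)^-1, (fg_of c); split; last by rewrite /= reduce_id.
by rewrite -[x]fg_of_val Dx !fg_ofM fg_ofV conjgE invgK.
Qed.

Lemma val_expg_cyclically_reduced (c : fgroup) m :
  cyclically_reduced (val c) -> val (c ^+ m) = flatten (nseq m (val c)).
Proof.
move=> cyc; elim: m => // m IHm; rewrite expgS /= IHm reduce_id //.
exact: (reduced_flatten_nseq m.+1 (valP c)).
Qed.

Lemma fg_expg_eq1 (z : fgroup) m : 0 < m -> (z ^+ m == 1) = (z == 1).
Proof.
move=> m_gt0; apply/eqP/eqP => [zm1 | ->]; last exact: expg1n.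
have [g [c [Dz cyc]]] := fg_conj_cyclically_reduced z.
move: zm1; rewrite Dz -conjXg => /eqP; rewrite conjg_eq1 => /eqP cm1.
have c1 : c = 1.
  apply: val_inj; move: (congr1 val cm1); rewrite val_expg_cyclically_reduced //.
  case: m m_gt0 {cm1} => // m _ /eqP; rewrite -size_eq0 size_cat addn_eq0 size_eq0.
  by case/andP=> /eqP.
by rewrite c1 conj1g.
Qed.

Lemma commute_reduced_cat (x y : fgroup) :
  commute x y -> reduced (val x ++ val y) -> val x ++ val y = val y ++ val x.
Proof.
move=> cxy red_xy.
have Exy : reduce (val x ++ val y) = reduce (val y ++ val x).
  by rewrite -[LHS]/(val (x * y)) cxy.
have Eyx : reduce (val y ++ val x) = val y ++ val x.
  apply/eqP; rewrite -(size_reduce _).2 -Exy reduce_id //.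
  by rewrite !size_cat addnC.
by rewrite -(reduce_id red_xy) Exy Eyx.
Qed.

(* If c ++ y is not reduced then neither is y ++ c, so the last letter of y
   cancels the first one of c; c being cyclically reduced, c ++ y^-1 is then
   reduced. *)
Lemma commute_cyclically_reduced (c y : fgroup) :
  cyclically_reduced (val c) -> commute c y ->
  val c ++ val y = val y ++ val c \/ val c ++ val y^-1 = val y^-1 ++ val c.
Proof.
move=> cyc ccy.
have [red_cy | nred_cy] := boolP (reduced (val c ++ val y)).
  by left; apply: commute_reduced_cat.
right; apply: commute_reduced_cat; first exact: commuteV.
have : ~~ reduced (val y ++ val c).
  apply: contra nred_cy => red_yc.
  by rewrite -(commute_reduced_cat (commute_sym ccy) red_yc).
have -> : val y^-1 = wopp (val y) by [].
move: (valP c) (valP y) cyc {nred_cy}.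
case: (val c) => [|x c'] red_c red_y cyc; first by rewrite cats0 red_y.
case: (val y) red_y => [|y0 y'] red_y; first by rewrite red_c.
rewrite reduced_cat red_c red_y andbT andTb /nocancel negbK => /eqP Dx.
rewrite (lastI y0 y') wopp_rcons reduced_cat red_c -{1}Dx [nocancel _ _]cyc.
by rewrite -wopp_rcons -lastI reduced_wopp.
Qed.

Lemma commute_common_root (x y : fgroup) : commute x y ->
  exists z m n, x = z ^+ m /\ (y = z ^+ n \/ y^-1 = z ^+ n).
Proof.
move=> cxy.
have [g [c [Dx cyc]]] := fg_conj_cyclically_reduced x.
set y' := y ^ g^-1.
have ccy' : commute c y'.
  by rewrite /commute /y' -[c](conjgK g) -Dx -!conjMg cxy.
have [h [Dh ch]] : exists h : fgroup,
    (h = y' \/ h = y'^-1) /\ val c ++ val h = val h ++ val c.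
  by case: (commute_cyclically_reduced cyc ccy') => ?; [exists y' | exists y'^-1]; auto.
have [zw [m [n [Dc Dh']]]] := cat_commute_flatten_nseq ch.
exists (fg_of zw ^ g), m, n; split.
  by rewrite Dx -conjXg -fg_of_flatten_nseq -Dc fg_of_val.
rewrite -conjXg -fg_of_flatten_nseq -Dh' fg_of_val.
by case: Dh => ->; [left | right]; rewrite ?conjVg /y' conjgKV.
Qed.

Lemma morph_commute_eq1 (f : UMagmaMorphism.type fgroup fgroup) (x y : fgroup) :
  commute x y -> x != 1 -> y != 1 -> (f x == 1) = (f y == 1).
Proof.
have eq1 (a b : fgroup) : commute a b -> a != 1 -> f a = 1 -> f b = 1.
  move=> cab a1 fa1.
  have [z [m [n [Da Db]]]] := commute_common_root cab.
  have m_gt0 : 0 < m by case: m Da => // Da; rewrite Da expg0 eqxx in a1.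
  have fz1 : f z = 1 by apply/eqP; rewrite -(fg_expg_eq1 _ m_gt0) -gmulfXn -Da fa1.
  have fzn1 : f (z ^+ n) = 1 by rewrite gmulfXn fz1 expg1n.
  case: Db => Db; first by rewrite Db.
  by apply: invg_inj; rewrite -gmulfV Db fzn1 invg1.
move=> cxy x1 y1; apply/eqP/eqP; first exact: eq1.
by apply: eq1 => //; apply: commute_sym.
Qed.

Lemma restrict_cat S u v : restrict S (u ++ v) = restrict S u ++ restrict S v.
Proof. exact: filter_cat. Qed.

Lemma restrict_comm S a b :
  restrict S (comm a b) = comm (restrict S a) (restrict S b).
Proof. by rewrite /comm /wadd /wopp /restrict !filter_cat !filter_rev !filter_map. Qed.

Lemma restrict_sub (S S' : {set V}) w :
  S \subset S' -> restrict S' (restrict S w) = restrict S' w.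
Proof.
move=> /subsetP sSS'; rewrite /restrict -filter_predI; apply: eq_filter => x /=.
by case: (boolP (x.1 \in S')) => //= notS'x; apply: contra notS'x; apply: sSS'.
Qed.

(* A cancelling pair x, x^-1 is either killed or kept as a whole. *)
Lemma reduce_restrict S w : reduce (restrict S (reduce w)) = reduce (restrict S w).
Proof.
elim: w => // x w IHw.
have restrict_push s : reduce (restrict S (push x s)) = reduce (restrict S (x :: s)).
  case: s => [|y s] //; rewrite push_cons; case: eqP => [-> | _] //.
  rewrite /restrict /=; case: (x.1 \notin S) => //.
  by rewrite !reduce_cons push_invK ?reduced_reduce.
rewrite reduce_cons restrict_push -[x :: reduce w]cat1s -[x :: w]cat1s !restrict_cat.
by rewrite -reduce_catr IHw reduce_catr.
Qed.

Definition fg_restrict S (x : fgroup) : fgroup := fg_of (restrict S (val x)).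

Lemma fg_of_restrict S w : fg_of (restrict S w) = fg_restrict S (fg_of w).
Proof. by apply: val_inj; rewrite /= reduce_restrict. Qed.

Lemma fg_restrict_morphism S : monoid_morphism (fg_restrict S).
Proof.
split; first exact: val_inj.
move=> x y; rewrite -[x * y]/(fg_of (val x ++ val y)).
by rewrite -fg_of_restrict restrict_cat fg_ofM.
Qed.

HB.instance Definition _ S :=
  isUMagmaMorphism.Build fgroup fgroup (fg_restrict S) (fg_restrict_morphism S).

Lemma is_zeroE w : is_zero w = (fg_of w == 1).
Proof. by rewrite -val_eqE. Qed.

Lemma fg_of_comm a b : fg_of (comm a b) = [~ (fg_of a)^-1, (fg_of b)^-1].
Proof. by rewrite /comm /wadd !fg_ofM !fg_ofV /commg /conjg !invgK. Qed.

Lemma is_zero_comml a b : is_zero a -> is_zero (comm a b).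
Proof. by rewrite !is_zeroE fg_of_comm => /eqP ->; rewrite invg1 comm1g. Qed.

Lemma is_zero_commr a b : is_zero b -> is_zero (comm a b).
Proof. by rewrite !is_zeroE fg_of_comm => /eqP ->; rewrite invg1 commg1. Qed.

Lemma comm_restrict_nonzero (S S' : {set V}) a b : S \subset S' ->
  ~~ is_zero (restrict S a) -> ~~ is_zero (restrict S b) ->
  is_zero (restrict S' a) != is_zero (restrict S' b) ->
  ~~ is_zero (restrict S (comm a b)).
Proof.
move=> sSS'; rewrite -(restrict_sub a sSS') -(restrict_sub b sSS').
rewrite restrict_comm !is_zeroE fg_of_comm.
rewrite (fg_of_restrict S' (restrict S a)) (fg_of_restrict S' (restrict S b)).
set x := fg_of (restrict S a); set y := fg_of (restrict S b).
move=> x1 y1 differ; apply/commgP => cxy.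
have := morph_commute_eq1 (fg_restrict S') cxy.
rewrite !gmulfV !invg_eq1 => /(_ x1 y1) Exy.
by rewrite Exy eqxx in differ.
Qed.

End FreeGroup.

Section CommutatorTrees.
Variable V : finType.
Implicit Types (T l r u : ctree (word V * spec_fun V)) (S : {set V}).

Definition leaves_solve T := forall p, subtree (Leaf p) T -> solves p.1 p.2.

Lemma subtree_refl u : subtree u u.
Proof. by case: u; left. Qed.

Lemma subtree_Node l r T : subtree (Node l r) T -> subtree l T /\ subtree r T.
Proof.
elim: T => [p [] // | l' IHl r' IHr [[-> ->] | [/IHl | /IHr] [sl sr]]].
- by split; right; [left | right]; apply: subtree_refl.
- by split; right; left.
- by split; right; right.
Qed.

Lemma leaf_join_Leaf p S : leaf_join (Leaf p) S = p.2 S.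
Proof. by rewrite /leaf_join /=; case: (p.2 S). Qed.

Lemma leaf_join_Node l r S :
  leaf_join (Node l r) S = join_outcome (leaf_join l S) (leaf_join r S).
Proof.
rewrite /leaf_join /= foldr_cat.
by elim: (leaves l) => //= p s ->; case: (p.2 S).
Qed.

Lemma leaf_join_fall_leaf p S T :
  subtree (Leaf p) T -> p.2 S = fall -> leaf_join T S = fall.
Proof.
elim: T => [q [[<-] | //] | l IHl r IHr [// | [/IHl | /IHr] IH]] pS.
- by rewrite leaf_join_Leaf.
- by rewrite leaf_join_Node IH.
- by rewrite leaf_join_Node IH //; case: (leaf_join l S).
Qed.

Lemma is_zero_subtree S u T : subtree u T ->
  is_zero (restrict S (ct_val u)) -> is_zero (restrict S (ct_val T)).
Proof.
elim: T => [p [-> //| //] | l IHl r IHr [-> // | [/IHl | /IHr] IH] zero_u];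
  rewrite /= restrict_comm.
- exact/is_zero_comml/IH.
- exact/is_zero_commr/IH.
Qed.

Lemma leaf_join_fall S T : leaves_solve T ->
  leaf_join T S = fall -> is_zero (restrict S (ct_val T)).
Proof.
elim: T => [p | l IHl r IHr] solve_T.
  by rewrite leaf_join_Leaf => /(solve_T p (subtree_refl _) S).2.
have [solve_l solve_r] : leaves_solve l /\ leaves_solve r.
  by split=> p sub; apply: solve_T; right; [left | right].
rewrite leaf_join_Node [ct_val _]/= restrict_comm.
case fall_l: (leaf_join l S) => fall_r.
  exact/is_zero_commr/(IHr solve_r fall_r).
exact/is_zero_comml/(IHl solve_l fall_l).
Qed.

Lemma solves_leaf_joinP T : leaves_solve T ->
  solves (ct_val T) (leaf_join T) <->
  ~ exists l r S, subtree (Node l r) T /\ leaf_join T S = hang /\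
                  is_zero (restrict S (ct_val (Node l r))).
Proof.
move=> solve_T; split.
  move=> solves_T [l [r [S [sub [hangS zero]]]]].
  by have := (solves_T S).1 (is_zero_subtree sub zero); rewrite hangS.
move=> no_node S; split; last exact: leaf_join_fall.
case: T solve_T no_node => [p | l r] solve_T no_node zero.
  by rewrite leaf_join_Leaf; apply: (solve_T p (subtree_refl _) S).1.
case hangS: (leaf_join _ S) => //; case: no_node.
by exists l, r, S; split; first exact: subtree_refl.
Qed.

Lemma separated_nonzero S T : leaves_solve T -> leaf_join T S = hang ->
  (forall l r, subtree (Node l r) T -> exists S', S \subset S' /\
     spec_of (ct_val l) S' <> spec_of (ct_val r) S') ->
  forall u, subtree u T -> ~~ is_zero (restrict S (ct_val u)).
Proof.
move=> solve_T hangS separated; elim=> [p | l IHl r IHr] sub.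
  apply/negP => /(solve_T p sub S).1 pS.
  by rewrite (leaf_join_fall_leaf sub pS) in hangS.
have [sub_l sub_r] := subtree_Node sub.
have [S' [sSS' differ]] := separated l r sub.
apply: (comm_restrict_nonzero sSS' (IHl sub_l) (IHr sub_r)).
by apply/negP => /eqP same; apply: differ; rewrite /spec_of same.
Qed.

End CommutatorTrees.

Theorem theorem1 (V : finType) (T : ctree (word V * spec_fun V)) :
  (forall p, subtree (Leaf p) T -> is_spec p.2 /\ solves p.1 p.2) ->
  let f := leaf_join T in
  ((solves (ct_val T) f <->
     ~ (exists (l r : ctree (word V * spec_fun V)) (S : {set V}),
          subtree (Node l r) T /\ f S = hang /\
          is_zero (restrict S (ct_val (Node l r)))))
   /\
   ((forall (S : {set V}) (l r : ctree (word V * spec_fun V)),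
       f S = hang -> subtree (Node l r) T ->
       exists S' : {set V}, S \subset S' /\
         spec_of (ct_val l) S' <> spec_of (ct_val r) S') ->
    solves (ct_val T) f)).
Proof.
move=> leaves_spec f.
have solve_T : leaves_solve T by move=> p /leaves_spec[].
have criterion := solves_leaf_joinP solve_T.
split=> // separated; apply/criterion => -[l [r [S [sub [hangS zero]]]]].
by move: zero; apply/negP; apply: separated_nonzero sub => // l' r'; apply: separated.
Qed.
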